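(* Let $G$ be a labeled complete bipartite graph (every edge labeled $+$ or $-$) with partite sets $V_1,V_2$, let $\alpha,\gamma$ be real parameters with $0<\gamma<\alpha<1/2$, and let $x$ be any fractional clustering of $G$. Let $\mathcal{C}$ be the clustering produced by the following algorithm (Algorithm 2), where ties in the choice of pivot are broken arbitrarily: Set $S=V(G)$. While $V_1\cap S\neq\emptyset$: for each $u\in V_1\cap S$ let $T_u=\{w\in S\setminus\{u\} : x_{uw}\le\alpha\}$ and $T^*_u=\{w\in V_2\cap S : x_{uw}\le\gamma\}$; choose a pivot $u\in V_1\cap S$ maximizing $|T^*_u|$ and let $T=T_u$; if $\sum_{w\in V_2\cap T}x_{uw}\ge\alpha|V_2\cap T|/2$, output the singleton cluster $\{u\}$ and set $S=S\setminus\{u\}$; otherwise output the cluster $\{u\}\cup T$ and set $S=S\setminus(\{u\}\cup T)$. After the loop, output each remaining vertex of $V_2\cap S$ as a singleton cluster. Then there is a constant $c$ depending only on $\alpha$ and $\gamma$ such that $\mathrm{err}(\mathcal{C})_v\le c\,\mathrm{err}(x)_v$ for all $v\in V_1$.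
   Context: A (discrete) clustering of $G$ is a partition of $V(G)$. A fractional clustering of $G$ is a vector $x$ indexed by all unordered pairs of distinct vertices of $G$ (not only edges) with $x_{uv}\in[0,1]$ for all pairs and $x_{vz}\le x_{vw}+x_{wz}$ for all distinct $v,w,z$; by convention $x_{uu}=0$. For vertex $v$, $N^+(v)$ and $N^-(v)$ denote the sets of vertices joined to $v$ by a $+$ edge, resp. a $-$ edge. The error vector of $x$ is the vector indexed by $V(G)$ with $\mathrm{err}(x)_v=\sum_{w\in N^+(v)}x_{vw}+\sum_{w\in N^-(v)}(1-x_{vw})$. For a clustering $\mathcal{C}$, $x^{\mathcal{C}}_{uv}=0$ if $u,v$ lie in the same cluster and $1$ otherwise, and $\mathrm{err}(\mathcal{C})=\mathrm{err}(x^{\mathcal{C}})$, i.e. the number of erroneous edges at each vertex ($+$ edges between clusters, $-$ edges within clusters). *)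

From HB Require Import structures.
From mathcomp Require Import all_boot all_order all_algebra.
From mathcomp Require Import reals.
Set Implicit Arguments. Unset Strict Implicit. Unset Printing Implicit Defensive.
Import Order.TTheory GRing.Theory Num.Theory.
Local Open Scope ring_scope.

Section Clustering.
Variables (R : realType) (V : finType).

(* A labeled complete bipartite graph with parts V1 and V2 := ~: V1:
   every pair {u,w} with u, w on different sides is an edge, labeled +
   if [pos u w] and - otherwise.  [pos] must be symmetric. *)
Definition labels_symmetric (pos : V -> V -> bool) : Prop :=
  forall u w, pos u w = pos w u.

Definition crossing (V1 : {set V}) (u w : V) : bool := (u \in V1) != (w \in V1).

Definition Npos (V1 : {set V}) (pos : V -> V -> bool) (v : V) : {set V} :=
  [set w | crossing V1 v w && pos v w].
Definition Nneg (V1 : {set V}) (pos : V -> V -> bool) (v : V) : {set V} :=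
  [set w | crossing V1 v w && ~~ pos v w].

(* Fractional clustering: a function on pairs (symmetric, so indexed by
   unordered pairs), values in [0,1], triangle inequality for distinct
   vertices, and x_uu = 0 by convention. *)
Definition fractional_clustering (x : V -> V -> R) : Prop :=
  [/\ forall u, x u u = 0,
      forall u v, x u v = x v u,
      forall u v, 0 <= x u v <= 1 &
      forall v w z, v != w -> w != z -> v != z -> x v z <= x v w + x w z].

Definition err (V1 : {set V}) (pos : V -> V -> bool) (x : V -> V -> R) (v : V) : R :=
  \sum_(w in Npos V1 pos v) x v w + \sum_(w in Nneg V1 pos v) (1 - x v w).

Definition xC (C : seq {set V}) (u v : V) : R :=
  if has (fun A : {set V} => (u \in A) && (v \in A)) C then 0 else 1.

Definition Tset (x : V -> V -> R) (alpha : R) (S : {set V}) (u : V) : {set V} :=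
  [set w in S :\ u | x u w <= alpha].
Definition Tstar (V1 : {set V}) (x : V -> V -> R) (gamma : R) (S : {set V}) (u : V)
  : {set V} :=
  [set w in ~: V1 :&: S | x u w <= gamma].

(* [alg2_run V1 x alpha gamma S C] : starting from current set S, a run of
   the loop (with arbitrary tie-breaking of the pivot) followed by the final
   step outputs the list of clusters C. *)
Inductive alg2_run (V1 : {set V}) (x : V -> V -> R) (alpha gamma : R)
  : {set V} -> seq {set V} -> Prop :=
| alg2_end (S : {set V}) :
    V1 :&: S = set0 ->
    alg2_run V1 x alpha gamma S [seq [set w] | w <- enum (~: V1 :&: S)]
| alg2_step (S : {set V}) (u : V) (rest : seq {set V}) :
    u \in V1 :&: S ->
    (forall u', u' \in V1 :&: S ->
       #|Tstar V1 x gamma S u'| <= #|Tstar V1 x gamma S u|)%N ->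
    let T := Tset x alpha S u in
    let cl := if alpha * #|~: V1 :&: T|%:R / 2 <= \sum_(w in ~: V1 :&: T) x u w
              then [set u] else u |: T in
    alg2_run V1 x alpha gamma (S :\: cl) rest ->
    alg2_run V1 x alpha gamma S (cl :: rest).

End Clustering.

From HB Require Import structures.
From mathcomp Require Import all_boot all_order all_algebra.
From mathcomp Require Import reals.
From mathcomp Require Import lra zify.
Import Order.TTheory GRing.Theory Num.Theory.
Local Open Scope ring_scope.
Set Implicit Arguments. Unset Strict Implicit. Unset Printing Implicit Defensive.

(* Fix v in V1.  By induction on the run, the error of v on its edges to
   V2 :&: S is at most 4 / (gamma (1 - 2 alpha)) times their LP error.  At a
   step with pivot u and cluster cl:
   - if v is not in cl, the edges from v into cl are settled; only the
     positive ones are cut.  Here x_uv > alpha, while a non-isolated pivot has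
     average LP distance below alpha/2 to its cluster, so by the triangle
     inequality these edges carry LP error alpha/2 on average;
   - if v = u, the threshold alpha (or, for an isolated pivot, the average
     distance alpha/2) separates the costly decisions from those the LP pays;
   - if v is in T_u, then x_uv <= alpha, and an edge vw is not paid for by
     the LP only when x_vw <= gamma < alpha < x_uw.  Since T*_u is largest,
     there are at most |T*_u :\: T*_v| such w, and each w with
     x_uw <= gamma < x_vw has LP error at least gamma (1 - 2 alpha). *)

Lemma card_setD_exchange (T : finType) (A B C : {set T}) :
  B \subset C -> (#|A| <= #|B|)%N -> (#|A :\: C| <= #|B :\: A|)%N.
Proof.
move=> BC AB; have := cardsID C A; have := cardsID A B.
have : (#|B :&: A| <= #|A :&: C|)%N by apply: subset_leq_card; rewrite setIC setIS.
lia.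
Qed.

Section RealSums.
Variables (R : realFieldType) (I : finType).
Implicit Types (A B : {set I}) (f e g : I -> R).

Lemma ler_sum_slack A f e g :
  (forall i, i \in A -> f i <= e i + g i) -> \sum_(i in A) g i <= 0 ->
  \sum_(i in A) f i <= \sum_(i in A) e i.
Proof.
by move=> fle g_le0; apply: le_trans (ler_sum _ fle) _; rewrite big_split /= gerDl.
Qed.

Lemma ler_sum_subset A B f : B \subset A -> (forall i, i \in A -> 0 <= f i) ->
  \sum_(i in B) f i <= \sum_(i in A) f i.
Proof.
move=> BA f_ge0; rewrite [X in _ <= X](big_setID B) (setIidPr BA) lerDl.
by apply: sumr_ge0 => i /setDP[iA _]; exact: f_ge0.
Qed.

Lemma sumr_indicator A B : B \subset A -> \sum_(i in A) (i \in B)%:R = #|B|%:R :> R.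
Proof.
move=> BA; rewrite (big_setID B) (setIidPr BA) /=.
rewrite [X in _ + X]big1 ?addr0 => [|i /setDP[_ /negbTE->]//].
by rewrite -sumr_const; apply: eq_bigr => i ->.
Qed.

Lemma ler_scaled_bound (s k c F E : R) :
  0 < s -> 0 <= E -> k <= c * s -> s * F <= k * E -> F <= c * E.
Proof. by move=> s_gt0 E_ge0 kc sF; nra. Qed.

End RealSums.

Section ClusteringVector.
Variables (R : realType) (V : finType).
Implicit Types (C : seq {set V}) (cl : {set V}) (u w : V).

Lemma xC_cons_notin C cl u w : u \notin cl -> xC R (cl :: C) u w = xC R C u w.
Proof. by rewrite /xC /= => /negbTE->. Qed.

Lemma xC_cons_mem C cl u w : u \in cl -> (forall A, A \in C -> u \notin A) ->
  xC R (cl :: C) u w = (w \notin cl)%:R.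
Proof.
move=> u_cl C_u; rewrite /xC /= u_cl /=.
case: (boolP (w \in cl)) => //= _.
by case: hasP => // -[A /C_u/negbTE->].
Qed.

Lemma xC_disjoint_r C u w : (forall A, A \in C -> w \notin A) -> xC R C u w = 1.
Proof.
by move=> C_w; rewrite /xC; case: hasP => // -[A /C_w/negbTE->]; rewrite andbF.
Qed.

End ClusteringVector.

Definition slack (R : realType) (alpha gamma : R) := gamma * (1 - 2 * alpha).

Section Algorithm2.
Variables (R : realType) (alpha gamma : R).
Hypotheses (gamma_gt0 : 0 < gamma) (gamma_lt_alpha : gamma < alpha)
  (alpha_lt_half : alpha < 1 / 2).

Local Notation delta := (slack alpha gamma).
Local Notation ratio := (4 / slack alpha gamma).

(* [lra] does not use section hypotheses, so they are pushed into the goal. *)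
Ltac parameter_bounds :=
  have := alpha_lt_half; have := gamma_lt_alpha; have := gamma_gt0.

Lemma slack_gt0 : 0 < delta.
Proof. by rewrite /slack mulr_gt0 // subr_gt0; parameter_bounds; lra. Qed.

Lemma slack_le_gamma : delta <= gamma.
Proof. by rewrite /slack ler_piMr ?ltW //; parameter_bounds; lra. Qed.

Lemma slack_le_gap : delta <= 1 - 2 * alpha.
Proof. by rewrite /slack ler_piMl //; parameter_bounds; lra. Qed.

Lemma ratio_mul_slack : ratio * delta = 4.
Proof. by rewrite divfK // gt_eqF // slack_gt0. Qed.

Lemma ratio_mul_alpha : 4 <= ratio * alpha.
Proof.
rewrite -{1}ratio_mul_slack ler_pM2l ?divr_gt0 ?slack_gt0 //.
by have := slack_le_gamma; parameter_bounds; lra.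
Qed.

Variables (V : finType) (V1 : {set V}) (pos : V -> V -> bool) (x : V -> V -> R).
Hypothesis x_frac : fractional_clustering x.

Local Notation V2 := (~: V1).
Implicit Types (S A cl : {set V}) (C : seq {set V}) (u w : V).

Lemma x_bound a b : 0 <= x a b <= 1.
Proof. by case: x_frac. Qed.

Lemma x_sym a b : x a b = x b a.
Proof. by case: x_frac. Qed.

Lemma x_triangle a b d : a != b -> b != d -> a != d -> x a d <= x a b + x b d.
Proof. by case: x_frac => _ _ _; apply. Qed.

Lemma V2_neq_V1 u w : u \in V1 -> w \in V2 -> w != u.
Proof. by move=> uV1; apply: contraTneq => ->; rewrite inE uV1. Qed.

Lemma V2_setI1 u : u \in V1 -> V2 :&: [set u] = set0.
Proof.
by move=> uV1; apply/setP => w; rewrite !inE andbC; case: eqP => // ->; rewrite uV1.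
Qed.

Definition pivot_isolated S u : bool :=
  alpha * #|V2 :&: Tset x alpha S u|%:R / 2 <= \sum_(w in V2 :&: Tset x alpha S u) x u w.

Definition pivot_cluster S u : {set V} :=
  if pivot_isolated S u then [set u] else u |: Tset x alpha S u.

Lemma pivot_isolatedE S u :
  pivot_isolated S u = (0 <= \sum_(w in V2 :&: Tset x alpha S u) (x u w - alpha / 2)).
Proof. by rewrite /pivot_isolated sumrB sumr_const subr_ge0 mulrAC mulr_natr. Qed.

Lemma mem_pivot_nbhd S u w : u \in V1 -> w \in V2 :&: S ->
  (w \in u |: Tset x alpha S u) = (x u w <= alpha).
Proof.
by move=> uV1 /setIP[wV2 wS]; rewrite !inE (negbTE (V2_neq_V1 uV1 wV2)) wS.
Qed.

Lemma Tstar_sub_Tset S u : u \in V1 -> Tstar V1 x gamma S u \subset Tset x alpha S u.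
Proof.
move=> uV1; apply/subsetP => w; rewrite !inE => /andP[/andP[wV2 ->] xuw] /=.
rewrite (le_trans xuw (ltW gamma_lt_alpha)) !andbT.
by apply: contraNneq wV2 => ->.
Qed.

Lemma alg2_run_sub S C : alg2_run V1 x alpha gamma S C ->
  forall A, A \in C -> A \subset S.
Proof.
elim=> [S' _ | S' u rest uS _ /= _ IH] A.
  by case/mapP=> w; rewrite mem_enum => /setIP[_ wS] ->; rewrite sub1set.
rewrite inE => /predU1P[-> | /IH/subset_trans->//]; last exact: subsetDl.
case: ifP => _; first by rewrite sub1set; case/setIP: uS.
rewrite subUset sub1set; case/setIP: uS => _ -> /=.
by apply/subsetP => w /setIdP[/setD1P[]].
Qed.

Variable v : V.
Hypothesis v_in_V1 : v \in V1.

Lemma cross_triangle u w : u \in V1 -> w \in V2 -> u != v ->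
  x v w <= x u v + x u w /\ x u v <= x u w + x v w.
Proof.
move=> uV1 wV2 uv; have wu := V2_neq_V1 uV1 wV2; have wv := V2_neq_V1 v_in_V1 wV2.
split; first by rewrite (x_sym u v); apply: x_triangle; rewrite // eq_sym.
by rewrite (x_sym v w); apply: x_triangle; rewrite // eq_sym.
Qed.

Definition edge_err (y : V -> V -> R) w : R := if pos v w then y v w else 1 - y v w.

Definition cluster_err cl w : R := if pos v w then (w \notin cl)%:R else (w \in cl)%:R.

Lemma err_edge_sum y : err V1 pos y v = \sum_(w in V2) edge_err y w.
Proof.
rewrite /err (bigID (pos v) (mem V2)) /=.
congr (_ + _); apply: eq_big => w; rewrite ?inE /crossing v_in_V1 /=.
- by case: (w \in V1).
- by case/andP=> _; rewrite /edge_err => ->.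
- by case: (w \in V1).
- by case/andP=> _ /negbTE; rewrite /edge_err => ->.
Qed.

Lemma edge_err_ge0 w : 0 <= edge_err x w.
Proof. by rewrite /edge_err; have := x_bound v w; case: pos; lra. Qed.

Lemma edge_err_cons_mem C cl w : v \in cl -> (forall A, A \in C -> v \notin A) ->
  edge_err (xC R (cl :: C)) w = cluster_err cl w.
Proof.
move=> vcl C_v; rewrite /edge_err /cluster_err xC_cons_mem //.
by case: pos => //; case: (w \in cl); rewrite /= ?subr0 ?subrr.
Qed.

Lemma edge_err_cons_cut C cl w : v \notin cl -> w \in cl ->
  (forall A, A \in C -> w \notin A) -> edge_err (xC R (cl :: C)) w = (pos v w)%:R.
Proof.
move=> vcl wcl C_w; rewrite /edge_err xC_cons_notin // xC_disjoint_r //.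
by case: pos; rewrite ?subrr.
Qed.

Lemma edge_err_cons_notin C cl w : v \notin cl ->
  edge_err (xC R (cl :: C)) w = edge_err (xC R C) w.
Proof. by move=> vcl; rewrite /edge_err xC_cons_notin. Qed.

Lemma isolated_pivot_err_le S : v \in S -> pivot_isolated S v ->
  alpha / 2 * \sum_(w in V2 :&: S) cluster_err [set v] w <=
  \sum_(w in V2 :&: S) edge_err x w.
Proof.
move=> vS; set T := Tset x alpha S v; rewrite pivot_isolatedE -/T => isolated.
rewrite mulr_sumr.
apply: (ler_sum_slack (g := fun w => if w \in T then alpha / 2 - x v w else 0)).
  move=> w /setIP[wV2 wS]; have wv := V2_neq_V1 v_in_V1 wV2.
  have -> : (w \in T) = (x v w <= alpha) by rewrite !inE wv wS.
  rewrite /cluster_err /edge_err inE (negbTE wv) /=.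
  have := x_bound v w; case: pos; case: (lerP (x v w) alpha) => /= ? ?;
    parameter_bounds; lra.
rewrite -big_mkcondr /=.
rewrite (eq_bigl (mem (V2 :&: T))) => [|w]; last first.
  by rewrite !inE; case: (w \in S); rewrite ?andbT ?andbF ?andFb.
by move: isolated; rewrite !sumrB; lra.
Qed.

Lemma clustered_pivot_err_le S :
  alpha * \sum_(w in V2 :&: S) cluster_err (v |: Tset x alpha S v) w <=
  \sum_(w in V2 :&: S) edge_err x w.
Proof.
rewrite mulr_sumr; apply: ler_sum => w wV2S.
rewrite /cluster_err /edge_err mem_pivot_nbhd //.
by have := x_bound v w; case: pos; case: (lerP (x v w) alpha) => /= ? ?;
  parameter_bounds; lra.
Qed.

Lemma other_pivot_edge_le S u w : u \in V1 -> u != v -> x u v <= alpha ->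
  w \in V2 :&: S ->
  delta * cluster_err (u |: Tset x alpha S u) w <=
  edge_err x w + delta * (w \in Tstar V1 x gamma S v :\: Tset x alpha S u)%:R.
Proof.
move=> uV1 uv xuv wV2S; case/setIP: (wV2S) => wV2 wS.
have [tri _] := cross_triangle uV1 wV2 uv.
have wT : (w \in Tset x alpha S u) = (x u w <= alpha).
  by rewrite !inE wS (V2_neq_V1 uV1 wV2).
have wTs : (w \in Tstar V1 x gamma S v) = (x v w <= gamma) by rewrite in_set wV2S.
rewrite /cluster_err /edge_err mem_pivot_nbhd // in_setD wT wTs.
have := x_bound v w; have := slack_gt0; have := slack_le_gamma; have := slack_le_gap.
by case: pos; case: (lerP (x u w) alpha); case: (lerP (x v w) gamma) => /= *;
  parameter_bounds; lra.
Qed.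

Lemma slack_card_le_err S u : u \in V1 -> u != v -> x u v <= alpha ->
  delta * #|Tstar V1 x gamma S u :\: Tstar V1 x gamma S v|%:R <=
  \sum_(w in V2 :&: S) edge_err x w.
Proof.
move=> uV1 uv xuv; set D := _ :\: _.
have DS : D \subset V2 :&: S.
  by apply: subset_trans (subsetDl _ _) _; apply/subsetP => w; rewrite in_set => /andP[].
apply: le_trans (ler_sum_subset DS (fun w _ => edge_err_ge0 w)).
rewrite mulr_natr -sumr_const; apply: ler_sum => w.
rewrite in_setD => /andP[wTv /setIdP[wV2S xuw]].
have xvw : gamma < x v w by rewrite ltNge; apply: contra wTv => xvw; exact/setIdP.
case/setIP: wV2S => wV2 _; have [tri _] := cross_triangle uV1 wV2 uv.
rewrite /edge_err; have := x_bound v w; have := slack_le_gamma; have := slack_le_gap.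
by case: pos => *; parameter_bounds; lra.
Qed.

Lemma other_pivot_err_le S u : u \in V1 -> u != v -> v \in Tset x alpha S u ->
  (#|Tstar V1 x gamma S v| <= #|Tstar V1 x gamma S u|)%N ->
  delta * \sum_(w in V2 :&: S) cluster_err (u |: Tset x alpha S u) w <=
  2 * \sum_(w in V2 :&: S) edge_err x w.
Proof.
move=> uV1 uv vT max_u; have xuv : x u v <= alpha by case/setIdP: vT.
set B := Tstar V1 x gamma S v :\: Tset x alpha S u.
have BS : B \subset V2 :&: S.
  by apply: subset_trans (subsetDl _ _) _; apply/subsetP => w; rewrite in_set => /andP[].
have card_B : (#|B| <= #|Tstar V1 x gamma S u :\: Tstar V1 x gamma S v|)%N.
  exact: card_setD_exchange (Tstar_sub_Tset S uV1) max_u.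
rewrite mulr_sumr.
apply: (le_trans (ler_sum _ (fun w => @other_pivot_edge_le S u w uV1 uv xuv))).
rewrite big_split /= -mulr_sumr sumr_indicator // mulrDl mul1r lerD2l.
apply: le_trans (slack_card_le_err S uV1 uv xuv).
by rewrite ler_pM2l ?slack_gt0 ?ler_nat.
Qed.

Lemma cut_cluster_err_le S u : u \in V1 -> v \in S -> v \notin pivot_cluster S u ->
  alpha / 2 * \sum_(w in V2 :&: pivot_cluster S u) (pos v w)%:R <=
  \sum_(w in V2 :&: pivot_cluster S u) edge_err x w.
Proof.
rewrite /pivot_cluster => uV1 vS; case: ifP => [_ _ | ].
  by rewrite V2_setI1 // !big_set0 mulr0.
rewrite pivot_isolatedE => /negbT; rewrite -ltNge => crowded v_out.
set T := Tset x alpha S u.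
have uv : u != v by apply: contraNneq v_out => ->; rewrite setU11.
have xuv : alpha < x u v.
  by move: v_out; rewrite !inE eq_sym (negbTE uv) vS /= -ltNge.
rewrite setIUr V2_setI1 // set0U.
have edge_le w : w \in V2 :&: T ->
  [/\ x u w <= alpha, x v w <= x u v + x u w & x u v <= x u w + x v w].
  by case/setIP => wV2 /setIdP[_ xuw]; have [] := cross_triangle uV1 wV2 uv.
rewrite mulr_sumr; have [near | far] := lerP (x u v) (1 - alpha / 2).
  apply: (ler_sum_slack (g := fun w => x u w - alpha / 2)); last exact: ltW.
  move=> w /edge_le[xuw tri1 tri2]; rewrite /edge_err; have := x_bound v w.
  by case: pos => /= ?; parameter_bounds; lra.
apply: ler_sum => w /edge_le[xuw tri1 tri2]; rewrite /edge_err; have := x_bound v w.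
by case: pos => /= ?; parameter_bounds; lra.
Qed.

Lemma pivot_cluster_mem_err_le S u : u \in V1 :&: S ->
  (forall u', u' \in V1 :&: S ->
     (#|Tstar V1 x gamma S u'| <= #|Tstar V1 x gamma S u|)%N) ->
  v \in S -> v \in pivot_cluster S u ->
  \sum_(w in V2 :&: S) cluster_err (pivot_cluster S u) w <=
  ratio * \sum_(w in V2 :&: S) edge_err x w.
Proof.
case/setIP=> uV1 uS max_u vS.
have E_ge0 : 0 <= \sum_(w in V2 :&: S) edge_err x w.
  by apply: sumr_ge0 => w _; exact: edge_err_ge0.
have ratio_alpha := ratio_mul_alpha; have ratio_slack := ratio_mul_slack.
rewrite /pivot_cluster; case: ifP => [isolated | _].
  rewrite inE => /eqP vu; subst u.
  apply: (@ler_scaled_bound _ (alpha / 2) 1) => //; first by parameter_bounds; lra.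
    by lra.
  by rewrite mul1r; exact: isolated_pivot_err_le.
have [-> _ | vu] := eqVneq u v.
  apply: (@ler_scaled_bound _ alpha 1) => //; first by parameter_bounds; lra.
    by lra.
  by rewrite mul1r; exact: clustered_pivot_err_le.
rewrite in_setU1 eq_sym (negbTE vu) /= => vT.
apply: (@ler_scaled_bound _ delta 2) => //; first exact: slack_gt0.
  by lra.
by apply: other_pivot_err_le => //; apply: max_u; rewrite inE v_in_V1.
Qed.

Lemma alg2_run_err_le S C : alg2_run V1 x alpha gamma S C -> v \in S ->
  \sum_(w in V2 :&: S) edge_err (xC R C) w <=
  ratio * \sum_(w in V2 :&: S) edge_err x w.
Proof.
move=> run; elim: run (run) => [S' noV1 _ | S' u rest uS max_u /= run IH run_cl] vS.
  by move/setP: noV1 => /(_ v); rewrite !inE v_in_V1 vS.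
rewrite -/(pivot_isolated S' u) -/(pivot_cluster S' u) in run run_cl IH *.
set cl := pivot_cluster S' u in run run_cl IH *.
have cl_sub : cl \subset S' by apply: (alg2_run_sub run_cl); rewrite mem_head.
have rest_out w A : w \in cl -> A \in rest -> w \notin A.
  move=> wcl /(alg2_run_sub run)/subsetP A_sub.
  by apply: contraL wcl => /A_sub; rewrite inE => /andP[].
have [vcl | vncl] := boolP (v \in cl).
  rewrite (eq_bigr (cluster_err cl)) => [|w _]; last first.
    by apply: edge_err_cons_mem => // A; exact: rest_out.
  exact: pivot_cluster_mem_err_le.
rewrite (big_setID cl) [X in _ <= _ * X](big_setID cl) mulrDr.
rewrite -setIA (setIidPr cl_sub) -setIDA.
apply: lerD.
  rewrite (eq_bigr (fun w => (pos v w)%:R)) => [|w /setIP[_ wcl]]; last first.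
    by apply: edge_err_cons_cut => // A; exact: rest_out.
  have E_ge0 : 0 <= \sum_(w in V2 :&: cl) edge_err x w.
    by apply: sumr_ge0 => w _; exact: edge_err_ge0.
  apply: (@ler_scaled_bound _ (alpha / 2) 1) => //; first by parameter_bounds; lra.
    by have := ratio_mul_alpha; lra.
  by rewrite mul1r; apply: cut_cluster_err_le => //; case/setIP: uS.
rewrite (eq_bigr (edge_err (xC R rest))) => [|w _]; last exact: edge_err_cons_notin.
by apply: (IH run); rewrite !inE vncl vS.
Qed.

End Algorithm2.

Theorem theorem2 (R : realType) (alpha gamma : R) :
  0 < gamma -> gamma < alpha -> alpha < 1 / 2 ->
  exists c : R,
    forall (V : finType) (V1 : {set V}) (pos : V -> V -> bool)
           (x : V -> V -> R) (C : seq {set V}),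
      labels_symmetric pos ->
      fractional_clustering x ->
      alg2_run V1 x alpha gamma [set: V] C ->
      forall v, v \in V1 ->
        err V1 pos (@xC R V C) v <= c * err V1 pos x v.
Proof.
move=> gamma_gt0 gamma_lt_alpha alpha_lt_half; exists (4 / slack alpha gamma).
(* Only the labels of edges at v are read, so the symmetry of pos is unused. *)
move=> V V1 pos x C _ x_frac run v v_in_V1.
rewrite !(err_edge_sum pos v_in_V1) -(setIT (~: V1)).
exact: (alg2_run_err_le gamma_gt0 gamma_lt_alpha alpha_lt_half pos x_frac v_in_V1 run).
Qed.
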